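(* Let $K$ be a field, $f\colon R\to S$ a morphism of Zinbiel algebras, $l\ge1$, and let $\Theta_t=\theta_0+\theta_lt^l+\theta_{l+1}t^{l+1}+\cdots$ (so $\theta_1=\dots=\theta_{l-1}=0$) be a deformation of $f$ such that $\theta_l$ is a $2$-coboundary in $C^2_{\mathrm{Zinb}}(f,f)$. Then there exists a formal isomorphism of $f$ of the form $\Phi_t=(\mathrm{Id}_R+\phi_Rt^l;\ \mathrm{Id}_S+\phi_St^l)$ with $\phi_R\in\mathrm{Hom}_K(R,R)$, $\phi_S\in\mathrm{Hom}_K(S,S)$, such that the deformation $\overline{\Theta}_t=\sum_{i\ge0}\overline{\theta}_it^i:=\Phi_t\Theta_t\Phi_t^{-1}$ satisfies $\overline{\theta}_i=0$ for $1\le i\le l$.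
   Context: A Zinbiel algebra over $K$ is a $K$-vector space $R$ with bilinear product $x\cdot y$ (also written $m_R(x,y)$) satisfying $(x\cdot y)\cdot z=x\cdot(y\cdot z)+x\cdot(z\cdot y)$. A morphism $f\colon R\to S$ is a linear map with $f(x\cdot y)=f(x)\cdot f(y)$. $R$ is a bimodule over itself, $S$ over itself, and $S$ is an $R$-bimodule via $r\cdot s=f(r)\cdot s$, $s\cdot r=s\cdot f(r)$. For a bimodule $A$ over $R$ and $1\le n\le4$, $C^n_{\mathrm{Zinb}}(R,A)=\mathrm{Hom}_K(R^{\otimes n},A)$ with $(d^1\varphi)(x,y)=x\cdot\varphi(y)-\varphi(x\cdot y)+\varphi(x)\cdot y$, $(d^2\varphi)(x,y,z)=x\cdot(\varphi(y,z)+\varphi(z,y))-\varphi(x\cdot y,z)+\varphi(x,y\cdot z+z\cdot y)-\varphi(x,y)\cdot z$, $(d^3\varphi)(x,y,z,w)=x\cdot\{\varphi(y,z,w)-\varphi(z,w,y)+\varphi(z,y,w)-\varphi(w,z,y)\}-\varphi(x\cdot y,z,w)+\varphi(x,y\cdot z+z\cdot y,w)-\varphi(x,y,z\cdot w+w\cdot z)+\varphi(x,y,z)\cdot w$. The deformation complex: $C^0_{\mathrm{Zinb}}(R,S)=0$, $d^0=0$, $C^n_{\mathrm{Zinb}}(f,f)=C^n_{\mathrm{Zinb}}(R,R)\times C^n_{\mathrm{Zinb}}(S,S)\times C^{n-1}_{\mathrm{Zinb}}(R,S)$ ($1\le n\le4$), $d^i_f(\xi;\pi;\varphi)=(d^i\xi;d^i\pi;f\xi-\pi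 f-d^{i-1}\varphi)$ with $(f\xi)(x_1,\dots)=f(\xi(x_1,\dots))$, $(\pi f)(x_1,\dots)=\pi(f(x_1),\dots)$. Elements of $C^1_{\mathrm{Zinb}}(f,f)$ are pairs $(\xi;\pi)$; a $2$-coboundary is an element $d^1_f(\xi;\pi)$. A deformation of $f$ is a formal power series $\Theta_t=\sum_{i\ge0}\theta_it^i$ with $\theta_0=(m_R;m_S;f)$ and $\theta_i=(m_{R,i};m_{S,i};f_i)\in C^2_{\mathrm{Zinb}}(f,f)$, such that for $*=R,S$ the bilinear map $M_{*,t}=\sum_i m_{*,i}t^i$ satisfies $M_{*,t}(M_{*,t}(x,y),z)=M_{*,t}(x,M_{*,t}(y,z))+M_{*,t}(x,M_{*,t}(z,y))$, and $F_t=\sum_if_it^i$ satisfies $F_t(M_{R,t}(x,y))=M_{S,t}(F_t(x),F_t(y))$. A formal isomorphism of $f$ is $\Phi_t=(\Phi_{R,t};\Phi_{S,t})=\sum_{i\ge0}(\phi_{R,i};\phi_{S,i})t^i$ with $(\phi_{R,0};\phi_{S,0})=(\mathrm{Id}_R;\mathrm{Id}_S)$ and $\phi_{R,i}\in\mathrm{Hom}_K(R,R)$, $\phi_{S,i}\in\mathrm{Hom}_K(S,S)$. For a deformation $\Theta_t=(M_{R,t};M_{S,t};F_t)$, $\Phi_t\Theta_t\Phi_t^{-1}$ is the deformation $(\Phi_{R,t}M_{R,t}\Phi_{R,t}^{-1};\ \Phi_{S,t}M_{S,t}\Phi_{S,t}^{-1};\ \Phi_{S,t}F_t\Phi_{R,t}^{-1})$,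 where $(\Phi M\Phi^{-1})(x,y)=\Phi(M(\Phi^{-1}x,\Phi^{-1}y))$. *)

From mathcomp Require Import all_boot all_order all_algebra.
Set Implicit Arguments. Unset Strict Implicit. Unset Printing Implicit Defensive.
Import GRing.Theory.
Local Open Scope ring_scope.

Section ZinbDefs.
Variable K : fieldType.

Definition bilin (U V : lmodType K) (m : U -> U -> V) : Prop :=
  (forall x, linear (m x)) /\ (forall y, linear (fun x => m x y)).

Definition zinbiel (R : lmodType K) (m : R -> R -> R) : Prop :=
  bilin m /\ forall x y z, m (m x y) z = m x (m y z) + m x (m z y).

Definition zinb_morph (R S : lmodType K) (mR : R -> R -> R) (mS : S -> S -> S)
  (f : R -> S) : Prop :=
  linear f /\ forall x y, f (mR x y) = mS (f x) (f y).

(* Zinbiel coboundary d^1 : C^1(R,A) -> C^2(R,A) for A = R over itself *)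
Definition d1 (R : lmodType K) (m : R -> R -> R) (xi : R -> R) : R -> R -> R :=
  fun x y => m x (xi y) - xi (m x y) + m (xi x) y.

(* A formal power series sum_i a_i t^i is represented by its coefficient
   sequence a : nat -> _.  Coefficient n of M_t(M_t(x,y),z) etc. *)
Definition zinb_series (R : lmodType K) (M : nat -> R -> R -> R) : Prop :=
  forall n x y z,
    \sum_(i < n.+1) M i (M (n - i)%N x y) z =
    \sum_(i < n.+1) (M i x (M (n - i)%N y z) + M i x (M (n - i)%N z y)).

(* coefficient n of F_t(M_{R,t}(x,y)) = M_{S,t}(F_t x, F_t y) *)
Definition morph_series (R S : lmodType K) (MR : nat -> R -> R -> R)
  (MS : nat -> S -> S -> S) (F : nat -> R -> S) : Prop :=
  forall n x y,
    \sum_(i < n.+1) F i (MR (n - i)%N x y) =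
    \sum_(i < n.+1) \sum_(j < n.+1) \sum_(k < n.+1)
       (if (i + j + k == n)%N then MS i (F j x) (F k y) else 0).

Definition is_deformation (R S : lmodType K) (mR : R -> R -> R) (mS : S -> S -> S)
  (f : R -> S) (MR : nat -> R -> R -> R) (MS : nat -> S -> S -> S)
  (F : nat -> R -> S) : Prop :=
  [/\ MR 0%N = mR, MS 0%N = mS & F 0%N = f] /\
  [/\ forall i, bilin (MR i), forall i, bilin (MS i) & forall i, linear (F i)] /\
  [/\ zinb_series MR, zinb_series MS & morph_series MR MS F].

(* The formal isomorphism component Id + phi t^l, as a coefficient sequence *)
Definition fiso (R : lmodType K) (l : nat) (phi : R -> R) : nat -> R -> R :=
  fun n => if n == 0%N then id else if n == l then phi else (fun _ => 0).

(* Its formal inverse (Id + phi t^l)^{-1} = sum_k (-phi)^k t^{kl}  (l >= 1) *)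
Definition fiso_inv (R : lmodType K) (l : nat) (phi : R -> R) : nat -> R -> R :=
  fun n => if (l %| n)%N then iter (n %/ l) (fun g x => - phi (g x)) id
           else (fun _ => 0).

(* coefficient n of Phi (M (Phi^{-1} x, Phi^{-1} y)) *)
Definition conj_mult (R : lmodType K) (Phi Psi : nat -> R -> R)
  (M : nat -> R -> R -> R) : nat -> R -> R -> R :=
  fun n x y => \sum_(a < n.+1) \sum_(b < n.+1) \sum_(c < n.+1) \sum_(d < n.+1)
     (if (a + b + c + d == n)%N then Phi a (M b (Psi c x) (Psi d y)) else 0).

(* coefficient n of Phi_S (F (Phi_R^{-1} x)) *)
Definition conj_map (R S : lmodType K) (PhiS : nat -> S -> S) (PsiR : nat -> R -> R)
  (F : nat -> R -> S) : nat -> R -> S :=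
  fun n x => \sum_(a < n.+1) \sum_(b < n.+1) \sum_(c < n.+1)
     (if (a + b + c == n)%N then PhiS a (F b (PsiR c x)) else 0).

End ZinbDefs.

From mathcomp Require Import all_boot all_order all_algebra.
From mathcomp Require Import zify.
From Stdlib Require Import FunctionalExtensionality.
Import GRing.Theory.
Set Implicit Arguments. Unset Strict Implicit. Unset Printing Implicit Defensive.
Local Open Scope ring_scope.

(* Every factor of Phi_t M_t (Phi_t^-1 x, Phi_t^-1 y) is its constant term plus
   terms of degree >= l, so below degree l only the constant terms meet (and
   give nothing in positive degree), while in degree l exactly one factor
   contributes its t^l term.  Hence conjugation leaves theta_1 .. theta_(l-1)
   zero and replaces theta_l by theta_l - d^1_f(phi_R; phi_S); choosing
   (phi_R; phi_S) = (xi; pi) with theta_l = d^1_f(xi; pi) kills theta_l. *)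

(* A summand vanishes when one of its indices lies strictly between 0 and l,
   or when its indices cannot add up to the degree considered. *)
Local Ltac vanish T_gap :=
  move=> ? ?; do ?(apply: big1 => ? _); case: ifP => //= /eqP ?; apply: T_gap; lia.

Section GapSums.
Variables (V : zmodType) (l : nat).
Hypothesis l_gt0 : (0 < l)%N.

Lemma big_ord_only0 n (G : 'I_n.+1 -> V) :
  (forall x : 'I_n.+1, (0 < x)%N -> G x = 0) -> \sum_(x < n.+1) G x = G ord0.
Proof. by move=> G0; rewrite big_ord_recl big1 ?addr0 // => x _; rewrite G0. Qed.

Lemma big_ord_gap (G : 'I_l.+1 -> V) :
  (forall x : 'I_l.+1, (0 < x < l)%N -> G x = 0) ->
  \sum_(x < l.+1) G x = G ord0 + G ord_max.
Proof.
move=> G_gap; rewrite (bigD1 ord0) // (bigD1 ord_max) => [|/=]; last first.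
  by rewrite -val_eqE /= -lt0n.
rewrite big1 => [|x /andP[x_neq0 x_neql]]; first by rewrite /= addr0.
apply: G_gap; move: x_neq0 x_neql; rewrite -!val_eqE /= -lt0n => -> /=.
by rewrite ltn_neqAle -ltnS ltn_ord andbT.
Qed.

Lemma big_conv4_gap n (T : nat -> nat -> nat -> nat -> V) :
  (0 < n <= l)%N ->
  (forall a b c d,
     [|| 0 < a < l, 0 < b < l, 0 < c < l | 0 < d < l]%N -> T a b c d = 0) ->
  \sum_(a < n.+1) \sum_(b < n.+1) \sum_(c < n.+1) \sum_(d < n.+1)
     (if (a + b + c + d == n)%N then T a b c d else 0) =
  if n == l then T 0 0 0 l + T 0 0 l 0 + T 0 l 0 0 + T l 0 0 0 else 0.
Proof.
move=> /andP[n_gt0 n_le_l] T_gap; have [n_lt_l|] := ltnP n l.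
  rewrite ifN ?ltn_eqF //; do 4!(apply: big1 => ? _).
  by case: ifP => // /eqP sum_n; apply: T_gap; lia.
move=> l_le_n; have {n_le_l l_le_n}-> : n = l by apply/eqP; rewrite eqn_leq n_le_l.
(* Index 0 and index l survive at each level; once an index equals l, all the
   later ones are forced to be 0. *)
rewrite eqxx big_ord_gap; last by vanish T_gap.
rewrite [X in _ + X]big_ord_only0; last by vanish T_gap.
rewrite [X in _ + X]big_ord_only0; last by vanish T_gap.
rewrite [X in _ + X]big_ord_only0; last by vanish T_gap.
rewrite big_ord_gap; last by vanish T_gap.
rewrite [X in _ + X + _]big_ord_only0; last by vanish T_gap.
rewrite [X in _ + X + _]big_ord_only0; last by vanish T_gap.
rewrite big_ord_gap; last by vanish T_gap.
rewrite [X in _ + X + _ + _]big_ord_only0; last by vanish T_gap.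
rewrite big_ord_gap; last by vanish T_gap.
by rewrite /= !addn0 !add0n eqxx eq_sym gtn_eqF // add0r.
Qed.

Lemma big_conv3_gap n (T : nat -> nat -> nat -> V) :
  (0 < n <= l)%N ->
  (forall a b c, [|| 0 < a < l, 0 < b < l | 0 < c < l]%N -> T a b c = 0) ->
  \sum_(a < n.+1) \sum_(b < n.+1) \sum_(c < n.+1)
     (if (a + b + c == n)%N then T a b c else 0) =
  if n == l then T 0 0 l + T 0 l 0 + T l 0 0 else 0.
Proof.
move=> n_range T_gap.
pose T4 a b c d := if d == 0%N then T a b c else 0.
have -> : \sum_(a < n.+1) \sum_(b < n.+1) \sum_(c < n.+1)
            (if (a + b + c == n)%N then T a b c else 0) =
          \sum_(a < n.+1) \sum_(b < n.+1) \sum_(c < n.+1) \sum_(d < n.+1)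
            (if (a + b + c + d == n)%N then T4 a b c d else 0).
  do 3!(apply: eq_bigr => ? _); rewrite big_ord_only0 ?addn0 // => d d_gt0.
  by rewrite /T4 eqn0Ngt d_gt0 /= if_same.
rewrite (big_conv4_gap (T := T4)) // => [|a b c d].
  by rewrite /T4 /= eqn0Ngt l_gt0 add0r.
rewrite /T4; case: (d =P 0%N) => [-> /=|//]; rewrite orbF; exact: T_gap.
Qed.

End GapSums.

Section ZinbielCoefficients.
Variable K : fieldType.

Section LinearMaps.
Variables U V : lmodType K.

Lemma linear_fun0 (f : U -> V) : linear f -> f 0 = 0.
Proof. by move=> /zmod_morphism_linear fB; rewrite -(subrr 0) fB subrr. Qed.

Lemma linear_funN (f : U -> V) x : linear f -> f (- x) = - f x.
Proof.
move=> f_lin; have fB := zmod_morphism_linear f_lin.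
by rewrite -sub0r fB (linear_fun0 f_lin) sub0r.
Qed.

Variable m : U -> U -> V.
Hypothesis m_bilin : bilin m.

Lemma bilin0l y : m 0 y = 0. Proof. exact: linear_fun0 (m_bilin.2 y). Qed.
Lemma bilin0r x : m x 0 = 0. Proof. exact: linear_fun0 (m_bilin.1 x). Qed.
Lemma bilinNl x y : m (- x) y = - m x y. Proof. exact: linear_funN (m_bilin.2 y). Qed.
Lemma bilinNr x y : m x (- y) = - m x y. Proof. exact: linear_funN (m_bilin.1 x). Qed.

End LinearMaps.

Section FormalIso.
Variables (U : lmodType K) (l : nat) (phi : U -> U).
Hypothesis l_gt0 : (0 < l)%N.

Lemma fiso_l : fiso l phi l = phi.
Proof. by rewrite /fiso eqxx eqn0Ngt l_gt0. Qed.

Lemma fiso_gap a : (0 < a < l)%N -> fiso l phi a = fun=> 0.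
Proof. by move=> a_gap; rewrite /fiso ifN ?ifN //; lia. Qed.

Lemma fiso_at0 a : phi 0 = 0 -> fiso l phi a 0 = 0.
Proof. by move=> phi0; rewrite /fiso; case: ifP => // _; case: ifP. Qed.

Lemma fiso_inv0 : fiso_inv l phi 0 = id.
Proof. by rewrite /fiso_inv dvdn0 div0n. Qed.

Lemma fiso_inv_l : fiso_inv l phi l = fun x => - phi x.
Proof. by rewrite /fiso_inv dvdnn divnn l_gt0. Qed.

Lemma fiso_inv_gap a : (0 < a < l)%N -> fiso_inv l phi a = fun=> 0.
Proof. by move=> a_gap; rewrite /fiso_inv ifN //; apply/negP => /dvdn_leq; lia. Qed.

End FormalIso.

Section ConjMult.
Variables (U : lmodType K) (l : nat) (phi : U -> U) (M : nat -> U -> U -> U).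
Hypotheses (l_gt0 : (0 < l)%N) (phi_lin : linear phi).
Hypothesis M_bilin : forall b, bilin (M b).
Hypothesis M_gap : forall b, (0 < b < l)%N -> M b = fun _ _ => 0.

Lemma conj_mult_coef n x y : (0 < n <= l)%N ->
  conj_mult (fiso l phi) (fiso_inv l phi) M n x y =
  if n == l then M l x y - d1 (M 0) phi x y else 0.
Proof.
pose T a b c d := fiso l phi a (M b (fiso_inv l phi c x) (fiso_inv l phi d y)).
move=> n_range; rewrite /conj_mult (big_conv4_gap l_gt0 (T := T)) // => [|a b c d].
  rewrite /T; case: ifP => // _.
  rewrite fiso_l // fiso_inv0 fiso_inv_l // /d1 /=.
  rewrite (bilinNl (M_bilin 0)) (bilinNr (M_bilin 0)).
  by rewrite addrAC addrC opprD opprB [in LHS]addrAC [- _ + _]addrC.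
rewrite /T; have phi0 := linear_fun0 phi_lin.
case/or4P=> [a_gap|b_gap|c_gap|d_gap].
- by rewrite fiso_gap.
- by rewrite M_gap // fiso_at0.
- by rewrite (fiso_inv_gap _ l_gt0 c_gap) bilin0l // fiso_at0.
- by rewrite (fiso_inv_gap _ l_gt0 d_gap) bilin0r // fiso_at0.
Qed.

End ConjMult.

Section ConjMap.
Variables (U W : lmodType K) (l : nat) (phiU : U -> U) (phiW : W -> W).
Variable F : nat -> U -> W.
Hypotheses (l_gt0 : (0 < l)%N) (phiW_lin : linear phiW).
Hypothesis F_lin : forall b, linear (F b).
Hypothesis F_gap : forall b, (0 < b < l)%N -> F b = fun=> 0.

Lemma conj_map_coef n x : (0 < n <= l)%N ->
  conj_map (fiso l phiW) (fiso_inv l phiU) F n x =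
  if n == l then F l x - (F 0 (phiU x) - phiW (F 0 x)) else 0.
Proof.
pose T a b c := fiso l phiW a (F b (fiso_inv l phiU c x)).
move=> n_range; rewrite /conj_map (big_conv3_gap l_gt0 (T := T)) // => [|a b c].
  rewrite /T; case: ifP => // _.
  rewrite fiso_l // fiso_inv0 fiso_inv_l // /=.
  rewrite (linear_funN _ (F_lin 0)).
  by rewrite addrAC addrC opprB [- _ + _]addrC.
rewrite /T; have phiW0 := linear_fun0 phiW_lin.
case/or3P=> [a_gap|b_gap|c_gap].
- by rewrite fiso_gap.
- by rewrite F_gap // fiso_at0.
- by rewrite (fiso_inv_gap _ l_gt0 c_gap) linear_fun0 // fiso_at0.
Qed.

End ConjMap.

End ZinbielCoefficients.

Theorem theorem4p1 (K : fieldType) (R S : lmodType K)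
  (mR : R -> R -> R) (mS : S -> S -> S) (f : R -> S) (l : nat)
  (MR : nat -> R -> R -> R) (MS : nat -> S -> S -> S) (F : nat -> R -> S) :
  zinbiel mR -> zinbiel mS -> zinb_morph mR mS f ->
  (1 <= l)%N ->
  is_deformation mR mS f MR MS F ->
  (forall i, (1 <= i < l)%N -> [/\ MR i = (fun _ _ => 0), MS i = (fun _ _ => 0)
                                  & F i = (fun _ => 0)]) ->
  (exists (xi : R -> R) (pi : S -> S), linear xi /\ linear pi /\
     [/\ MR l = d1 mR xi, MS l = d1 mS pi & F l = (fun x => f (xi x) - pi (f x))]) ->
  exists (phiR : R -> R) (phiS : S -> S), linear phiR /\ linear phiS /\
    forall i, (1 <= i <= l)%N ->
      [/\ conj_mult (fiso l phiR) (fiso_inv l phiR) MR i = (fun _ _ => 0),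
          conj_mult (fiso l phiS) (fiso_inv l phiS) MS i = (fun _ _ => 0)
        & conj_map (fiso l phiS) (fiso_inv l phiR) F i = (fun _ => 0)].
Proof.
move=> _ _ _ l_gt0 [[MR0 MS0 F0] [[MR_bilin MS_bilin F_lin] _]] low_zero.
case=> xi [pi [xi_lin [pi_lin [MR_l MS_l F_l]]]].
exists xi, pi; split=> //; split=> // i i_range.
have MR_gap b (b_gap : (0 < b < l)%N) : MR b = fun _ _ => 0.
  by case: (low_zero b b_gap).
have MS_gap b (b_gap : (0 < b < l)%N) : MS b = fun _ _ => 0.
  by case: (low_zero b b_gap).
have F_gap b (b_gap : (0 < b < l)%N) : F b = fun=> 0.
  by case: (low_zero b b_gap).
split; do !apply: functional_extensionality => ?.
- by rewrite conj_mult_coef //; case: eqP => // _; rewrite MR_l MR0 subrr.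
- by rewrite conj_mult_coef //; case: eqP => // _; rewrite MS_l MS0 subrr.
- by rewrite conj_map_coef //; case: eqP => // _; rewrite F_l F0 subrr.
Qed.
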